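(* Let $\widehat{\mathcal T}_\bullet$ be an arbitrary hierarchical mesh. Then $\Pi_\bullet(\widehat T)\subseteq\mathcal N_\bullet(\widehat T)$ for all $\widehat T\in\widehat{\mathcal T}_\bullet$, where $\Pi_\bullet(\widehat T)=\{\widehat T'\in\widehat{\mathcal T}_\bullet:\widehat T'\cap\widehat T\ne\emptyset\}$.
   Context: Parameter domain $\widehat\Omega=(0,1)^d$, $d\ge2$; degrees $p_1,\dots,p_d\ge1$. For each $i$, $\widehat{\mathcal K}^0_i$ is a $p_i$-open knot vector in $[0,1]$ (first $p_i+1$ knots $0$, last $p_i+1$ knots $1$, interior multiplicities $\le p_i$); $\widehat{\mathcal K}^{k+1}_i$ arises from $\widehat{\mathcal K}^k_i$ by inserting each nondegenerate span's midpoint once. $\widehat{\mathcal B}^k$: tensor-product B-splines of degree $(p_1,\dots,p_d)$ for $\widehat{\mathcal K}^k$; $\widehat{\mathcal T}^k$: closed cells of level $k$. A hierarchical mesh is given by closed sets $[0,1]^d=\widehat\Omega^0_\bullet\supseteq\widehat\Omega^1_\bullet\supseteq\cdots$, each $\widehat\Omega^k_\bullet$ ($k\ge1$) a union of cells of $\widehat{\mathcal T}^{k-1}$, eventually empty; mesh $\widehat{\mathcal T}_\bullet=\bigcup_k\{\widehat T\in\widehat{\mathcal T}^k:\widehat T\subseteq\widehat\Omega^k_\bullet,\widehat T\not\subseteq\widehat\Omega^{k+1}_\bullet\}$; hierarchical basis $\widehat{\mathcal H}_\bullet=\bigcup_k\{\widehat\beta\in\widehat{\mathcal B}^k:{\rm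 supp}\,\widehat\beta\subseteq\widehat\Omega^k_\bullet,{\rm supp}\,\widehat\beta\not\subseteq\widehat\Omega^{k+1}_\bullet\}$. Neighbors $\mathcal N_\bullet(\widehat T)=\{\widehat T'\in\widehat{\mathcal T}_\bullet:\exists\widehat\beta\in\widehat{\mathcal H}_\bullet,\ \widehat T,\widehat T'\subseteq{\rm supp}\,\widehat\beta\}$. *)

From Stdlib Require Import Reals List Arith.
Import ListNotations.
Open Scope R_scope.

(* Points of R^d are functions nat -> R; only coordinates i < d are used. *)
Definition point := nat -> R.
Definition rset := point -> Prop.
Definition subset (A B : rset) : Prop := forall x, A x -> B x.

Definition knot (K : list R) (j : nat) : R := nth j K 0.

Fixpoint refine (K : list R) : list R :=
  match K with
  | a :: ((b :: _) as t) =>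
      if Rlt_dec a b then a :: (a + b) / 2 :: refine t else a :: refine t
  | _ => K
  end.

(* p-open knot vector in [0,1]: sorted, first p+1 knots 0, last p+1 knots 1
   (0 and 1 have multiplicity exactly p+1), interior multiplicities <= p *)
Definition p_open (p : nat) (K : list R) : Prop :=
  (2 * (p + 1) <= length K)%nat /\
  (forall j, (S j < length K)%nat -> knot K j <= knot K (S j)) /\
  (forall j, (j <= p)%nat -> knot K j = 0) /\
  (forall j, (j <= p)%nat -> knot K (length K - 1 - j) = 1) /\
  0 < knot K (p + 1) /\ knot K (length K - p - 2) < 1 /\
  (forall x, 0 < x < 1 -> (count_occ Req_dec_T K x <= p)%nat).

Definition lknots (K0 : nat -> list R) (k i : nat) : list R :=
  Nat.iter k refine (K0 i).

Definition is_bspline (d : nat) (p : nat -> nat) (K0 : nat -> list R)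
  (k : nat) (j : nat -> nat) : Prop :=
  forall i, (i < d)%nat -> (j i + p i + 1 < length (lknots K0 k i))%nat.

Definition bsupp (d : nat) (p : nat -> nat) (K0 : nat -> list R)
  (k : nat) (j : nat -> nat) : rset :=
  fun x => forall i, (i < d)%nat ->
    knot (lknots K0 k i) (j i) <= x i <= knot (lknots K0 k i) (j i + p i + 1).

Definition is_cell (d : nat) (K0 : nat -> list R) (k : nat) (c : nat -> nat) : Prop :=
  forall i, (i < d)%nat ->
    (c i + 1 < length (lknots K0 k i))%nat /\
    knot (lknots K0 k i) (c i) < knot (lknots K0 k i) (c i + 1).

Definition cell (d : nat) (K0 : nat -> list R) (k : nat) (c : nat -> nat) : rset :=
  fun x => forall i, (i < d)%nat ->
    knot (lknots K0 k i) (c i) <= x i <= knot (lknots K0 k i) (c i + 1).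

Definition hier_domains (d : nat) (K0 : nat -> list R) (Omega : nat -> rset) : Prop :=
  (forall x, Omega 0%nat x <-> forall i, (i < d)%nat -> 0 <= x i <= 1) /\
  (forall k, exists C : (nat -> nat) -> Prop,
      (forall c, C c -> is_cell d K0 k c) /\
      (forall x, Omega (S k) x <-> exists c, C c /\ cell d K0 k c x)) /\
  (forall k, subset (Omega (S k)) (Omega k)) /\
  (exists N, forall k, (N <= k)%nat -> forall x, ~ Omega k x).

Definition in_mesh (d : nat) (K0 : nat -> list R) (Omega : nat -> rset)
  (k : nat) (c : nat -> nat) : Prop :=
  is_cell d K0 k c /\ subset (cell d K0 k c) (Omega k) /\
  ~ subset (cell d K0 k c) (Omega (S k)).

Definition in_hbasis (d : nat) (p : nat -> nat) (K0 : nat -> list R)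
  (Omega : nat -> rset) (k : nat) (j : nat -> nat) : Prop :=
  is_bspline d p K0 k j /\ subset (bsupp d p K0 k j) (Omega k) /\
  ~ subset (bsupp d p K0 k j) (Omega (S k)).

(* (k',c') is in N(T) for T = cell (k,c) *)
Definition neighbor (d : nat) (p : nat -> nat) (K0 : nat -> list R)
  (Omega : nat -> rset) (k : nat) (c : nat -> nat) (k' : nat) (c' : nat -> nat) : Prop :=
  in_mesh d K0 Omega k' c' /\
  exists kb jb, in_hbasis d p K0 Omega kb jb /\
    subset (cell d K0 k c) (bsupp d p K0 kb jb) /\
    subset (cell d K0 k' c') (bsupp d p K0 kb jb).

Definition in_patch (d : nat) (K0 : nat -> list R) (Omega : nat -> rset)
  (k : nat) (c : nat -> nat) (k' : nat) (c' : nat -> nat) : Prop :=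
  in_mesh d K0 Omega k' c' /\
  exists x, cell d K0 k' c' x /\ cell d K0 k c x.

(* Let m be the smaller of the levels of T and T'. In each direction, the
   bounding box of T and T' contains strictly inside it at most one distinct
   knot value of any level l <= m: such a knot cannot cut either cell, so it
   sits where the two spans meet. That value is interior, so its multiplicity
   is at most p_i (refinement only adds simple knots, and p_i >= 1); hence
   some level-l B-spline support contains the box.
   Start at level 0, where every support lies in Omega^0. While the current
   support lies in Omega^(l+1), pass to a level-(l+1) B-spline whose support
   contains the box and lies inside the old one (refinement keeps the old
   knots). This stops at some level <= m, because at level m the support
   contains the coarser of T, T', which is not inside Omega^(m+1); the
   B-spline reached is then in the hierarchical basis and its support contains
   both T and T'. *)

From Stdlib Require Import Reals List Arith Lia Lra Sorted Classical.
Open Scope R_scope.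

Lemma bounded_choice (d : nat) (P : nat -> nat -> Prop) :
  (forall i, (i < d)%nat -> exists n, P i n) ->
  exists f : nat -> nat, forall i, (i < d)%nat -> P i (f i).
Proof.
  induction d as [|d IH]; intros H.
  - exists (fun _ => 0%nat). intros i Hi. lia.
  - destruct IH as [f Hf]. { intros i Hi. apply H. lia. }
    destruct (H d (Nat.lt_succ_diag_r d)) as [n Hn].
    exists (fun i => if Nat.eq_dec i d then n else f i).
    intros i Hi. destruct (Nat.eq_dec i d) as [->|Hne]; [exact Hn|].
    apply Hf. lia.
Qed.

Lemma strictly_increasing_shift (f : nat -> nat) :
  (forall i, (f i < f (S i))%nat) -> forall i n, (f i + n <= f (i + n))%nat.
Proof.
  intros Hf i n. induction n as [|n IH]; [rewrite !Nat.add_0_r; lia|].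
  specialize (Hf (i + n)%nat). replace (i + S n)%nat with (S (i + n)) by lia. lia.
Qed.

Lemma sorted_nth_le (L : list R) (i j : nat) :
  Sorted Rle L -> (i <= j)%nat -> (j < length L)%nat -> nth i L 0 <= nth j L 0.
Proof.
  intros HL. apply Sorted_StronglySorted in HL; [|exact Rle_trans].
  revert i j. induction HL as [|a t Ht IH Ha]; intros i j Hij Hj; simpl in Hj; [lia|].
  destruct i as [|i], j as [|j]; simpl.
  - lra.
  - rewrite Forall_forall in Ha. apply Ha, nth_In. lia.
  - lia.
  - apply IH; lia.
Qed.

Lemma sorted_of_nth_le (L : list R) :
  (forall j, (S j < length L)%nat -> nth j L 0 <= nth (S j) L 0) -> Sorted Rle L.
Proof.
  induction L as [|a t IH]; intros H; constructor.
  - apply IH. intros j Hj. apply (H (S j)). simpl; lia.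
  - destruct t as [|b t]; constructor. apply (H 0%nat). simpl; lia.
Qed.

Lemma sorted_no_knot_inside_span (L : list R) (y : R) (c : nat) :
  Sorted Rle L -> In y L -> (c + 1 < length L)%nat ->
  ~ (nth c L 0 < y < nth (c + 1) L 0).
Proof.
  intros HL Hy Hc [Hlo Hhi]. destruct (In_nth L y 0 Hy) as [n [Hn <-]].
  destruct (le_lt_dec n c).
  - pose proof (sorted_nth_le L n c HL ltac:(lia) ltac:(lia)). lra.
  - pose proof (sorted_nth_le L (c + 1) n HL ltac:(lia) Hn). lra.
Qed.

Lemma count_occ_run (L : list R) (z : R) (s m : nat) :
  (forall n, (s <= n < s + m)%nat -> nth n L 0 = z) -> (s + m <= length L)%nat ->
  (m <= count_occ Req_dec_T L z)%nat.
Proof.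
  revert s m. induction L as [|a t IH]; intros s m Hrun Hlen; simpl in Hlen; [lia|].
  destruct s as [|s].
  - destruct m as [|m]; [lia|].
    assert (Ha : a = z) by (apply (Hrun 0%nat); lia). subst a.
    rewrite count_occ_cons_eq by reflexivity.
    enough (m <= count_occ Req_dec_T t z)%nat by lia.
    apply (IH 0%nat); [|lia]. intros n Hn. apply (Hrun (S n)). lia.
  - enough (m <= count_occ Req_dec_T t z)%nat by (simpl; destruct (Req_dec_T a z); lia).
    apply (IH s); [|lia]. intros n Hn. apply (Hrun (S n)). lia.
Qed.

Definition at_most_one_knot_in (L : list R) (al be : R) : Prop :=
  forall y y', In y L -> In y' L -> al < y < be -> al < y' < be -> y = y'.

(* Shrink [lo, hi] while possible; once it cannot shrink, all knots strictly
   between lo and hi lie in (al, be), so they share one value whose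
   multiplicity caps hi - lo - 1. *)
Lemma knot_window (L : list R) (p : nat) (al be : R) :
  Sorted Rle L -> at_most_one_knot_in L al be ->
  (forall x, al < x < be -> (count_occ Req_dec_T L x <= p)%nat) ->
  forall lo hi, (lo + p + 1 <= hi)%nat -> (hi < length L)%nat ->
  nth lo L 0 <= al -> be <= nth hi L 0 ->
  exists j, (lo <= j)%nat /\ (j + p + 1 <= hi)%nat /\
    nth j L 0 <= al /\ be <= nth (j + p + 1) L 0.
Proof.
  intros HL Hone Hcount lo hi.
  remember (hi - lo)%nat as n eqn:Hn. revert lo hi Hn.
  induction n as [|n IH]; intros lo hi Hn Hgap Hhi Hlo Hbe; [lia|].
  destruct (Nat.eq_dec hi (lo + p + 1)) as [->|Hne].
  { exists lo. repeat split; auto. }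
  destruct (Rle_lt_dec (nth (S lo) L 0) al) as [Hlo'|Hlo'].
  { destruct (IH (S lo) hi) as (j & Hj1 & Hj2 & Hj3 & Hj4); auto; try lia.
    exists j. repeat split; auto; lia. }
  destruct (Rle_lt_dec be (nth (hi - 1) L 0)) as [Hhi'|Hhi'].
  { destruct (IH lo (hi - 1)%nat) as (j & Hj1 & Hj2 & Hj3 & Hj4); auto; try lia.
    exists j. repeat split; auto; lia. }
  assert (Hz : al < nth (S lo) L 0 < be).
  { pose proof (sorted_nth_le L (S lo) (hi - 1)%nat HL ltac:(lia) ltac:(lia)). lra. }
  assert (Hrun : forall k, (S lo <= k < S lo + (hi - 1 - lo))%nat ->
    nth k L 0 = nth (S lo) L 0).
  { intros k Hk.
    pose proof (sorted_nth_le L (S lo) k HL ltac:(lia) ltac:(lia)).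
    pose proof (sorted_nth_le L k (hi - 1)%nat HL ltac:(lia) ltac:(lia)).
    apply Hone; try (apply nth_In; lia); lra. }
  pose proof (count_occ_run L _ _ _ Hrun ltac:(lia)).
  specialize (Hcount _ Hz). lia.
Qed.

Lemma refine_cons_cons (a b : R) (t : list R) :
  refine (a :: b :: t) =
  if Rlt_dec a b then a :: (a + b) / 2 :: refine (b :: t) else a :: refine (b :: t).
Proof. reflexivity. Qed.

Lemma refine_cons_hd (b : R) (t : list R) : exists r, refine (b :: t) = b :: r.
Proof.
  destruct t as [|c t]; [exists nil; reflexivity|].
  rewrite refine_cons_cons. destruct (Rlt_dec b c); eexists; reflexivity.
Qed.

Lemma sorted_refine (L : list R) : Sorted Rle L -> Sorted Rle (refine L).
Proof.
  induction L as [|a t IH]; [easy|]. destruct t as [|b t]; [easy|].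
  intros HL. apply Sorted_inv in HL as [Ht Hab]. apply HdRel_inv in Hab.
  specialize (IH Ht). rewrite refine_cons_cons.
  destruct (refine_cons_hd b t) as [r Hr]. rewrite Hr in *.
  destruct (Rlt_dec a b).
  - apply Sorted_cons; [apply Sorted_cons; [exact IH|]|]; constructor; lra.
  - apply Sorted_cons; [exact IH|]. constructor; lra.
Qed.

Lemma refine_incl (L : list R) : incl L (refine L).
Proof.
  induction L as [|a t IH]; [easy|]. destruct t as [|b t]; [apply incl_refl|].
  rewrite refine_cons_cons.
  destruct (Rlt_dec a b); intros y [<-|Hy]; simpl; auto.
Qed.

Lemma Forall_refine (P : R -> Prop) (L : list R) :
  (forall a b, P a -> P b -> P ((a + b) / 2)) -> Forall P L -> Forall P (refine L).
Proof.
  intros Hmid. induction L as [|a t IH]; [easy|]. destruct t as [|b t]; [easy|].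
  intros HL. pose proof HL as [Ha Hbt]%Forall_cons_iff.
  pose proof Hbt as [Hb _]%Forall_cons_iff.
  rewrite refine_cons_cons. destruct (Rlt_dec a b); auto.
Qed.

Lemma refine_lower_bound (b : R) (t : list R) :
  Sorted Rle (b :: t) -> Forall (Rle b) (refine (b :: t)).
Proof.
  intros Hs. apply Forall_refine; [intros; lra|].
  apply Sorted_StronglySorted in Hs; [|exact Rle_trans].
  apply StronglySorted_inv in Hs as [_ Ht]. constructor; [lra|exact Ht].
Qed.

Lemma count_occ_refine (L : list R) (x : R) : Sorted Rle L ->
  (count_occ Req_dec_T (refine L) x <= Nat.max (count_occ Req_dec_T L x) 1)%nat.
Proof.
  induction L as [|a t IH]; [simpl; lia|]. destruct t as [|b t]; [simpl; lia|].
  intros Hs. apply Sorted_inv in Hs as [Ht Hab]. apply HdRel_inv in Hab.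
  specialize (IH Ht).
  assert (Hbelow : forall y, y < b -> count_occ Req_dec_T (refine (b :: t)) y = 0%nat).
  { intros y Hy. apply count_occ_not_In. intros Hin.
    pose proof (refine_lower_bound b t Ht) as Hlb. rewrite Forall_forall in Hlb.
    specialize (Hlb y Hin). lra. }
  rewrite refine_cons_cons. destruct (Rlt_dec a b); cbn [count_occ].
  - destruct (Req_dec_T a x) as [<-|Hax].
    + destruct (Req_dec_T ((a + b) / 2) a); [lra|]. rewrite Hbelow; [lia|lra].
    + destruct (Req_dec_T ((a + b) / 2) x) as [<-|]; [|exact IH].
      rewrite Hbelow; [lia|lra].
  - destruct (Req_dec_T a x) as [<-|Hax]; [|exact IH].
    assert (b = a) as -> by lra. cbn [count_occ] in IH |- *.
    destruct (Req_dec_T a a); [lia|easy].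
Qed.

Lemma refine_embedding (L : list R) : exists f : nat -> nat,
  (forall i, (f i < f (S i))%nat) /\
  forall i, (i < length L)%nat ->
    (f i < length (refine L))%nat /\ nth (f i) (refine L) 0 = nth i L 0.
Proof.
  induction L as [|a t IH].
  { exists (fun i => i). split; [intros; lia|]. simpl; intros; lia. }
  destruct t as [|b t].
  { exists (fun i => i). split; [intros; lia|]. simpl; intros; auto. }
  destruct IH as [g [Hg Hgnth]]. rewrite refine_cons_cons.
  destruct (Rlt_dec a b).
  - exists (fun i => match i with 0 => 0 | S i => S (S (g i)) end)%nat. split.
    + intros [|i]; [lia|]. specialize (Hg i). lia.
    + intros [|i] Hi; cbn [length nth] in Hi |- *; [split; [lia|reflexivity]|].
      destruct (Hgnth i) as [H1 H2]; [cbn [length]; lia|]. split; [lia|exact H2].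
  - exists (fun i => match i with 0 => 0 | S i => S (g i) end)%nat. split.
    + intros [|i]; [lia|]. specialize (Hg i). lia.
    + intros [|i] Hi; cbn [length nth] in Hi |- *; [split; [lia|reflexivity]|].
      destruct (Hgnth i) as [H1 H2]; [cbn [length]; lia|]. split; [lia|exact H2].
Qed.

Lemma touching_spans_knot (u v u' v' t y : R) :
  u <= t <= v -> u' <= t <= v' -> ~ (u < y < v) -> ~ (u' < y < v') ->
  Rmin u u' < y < Rmax v v' -> y = Rmax u u'.
Proof.
  intros Ht Ht' Hy Hy'.
  unfold Rmin, Rmax; destruct (Rle_dec u u'), (Rle_dec v v');
  destruct (Rle_or_lt y u), (Rle_or_lt v y), (Rle_or_lt y u'), (Rle_or_lt v' y);
  intros; first [lra | exfalso; apply Hy; lra | exfalso; apply Hy'; lra].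
Qed.

Definition box (d : nat) (a b : nat -> R) : rset :=
  fun x => forall i, (i < d)%nat -> a i <= x i <= b i.

Lemma lknots_S (K0 : nat -> list R) (l i : nat) :
  lknots K0 (S l) i = refine (lknots K0 l i).
Proof. reflexivity. Qed.

Lemma lknots_incl (K0 : nat -> list R) (l k i : nat) :
  (l <= k)%nat -> incl (lknots K0 l i) (lknots K0 k i).
Proof.
  induction 1 as [|k _ IH]; [apply incl_refl|].
  rewrite lknots_S. eapply incl_tran; [exact IH|apply refine_incl].
Qed.

Section HierarchicalSplines.

Variables (d : nat) (p : nat -> nat) (K0 : nat -> list R).
Hypothesis p_pos : forall i, (i < d)%nat -> (1 <= p i)%nat.
Hypothesis K0_open : forall i, (i < d)%nat -> p_open (p i) (K0 i).

Lemma lknots_sorted (l i : nat) : (i < d)%nat -> Sorted Rle (lknots K0 l i).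
Proof.
  intros Hi. induction l as [|l IH].
  - destruct (K0_open i Hi) as (_ & Hadj & _). apply sorted_of_nth_le, Hadj.
  - rewrite lknots_S. apply sorted_refine, IH.
Qed.

Lemma lknots_in_unit (l i : nat) : (i < d)%nat ->
  Forall (fun y => 0 <= y <= 1) (lknots K0 l i).
Proof.
  intros Hi. induction l as [|l IH].
  - destruct (K0_open i Hi) as (Hlen & _ & Hfirst & Hlast & _).
    specialize (Hfirst 0%nat (Nat.le_0_l _)). specialize (Hlast 0%nat (Nat.le_0_l _)).
    rewrite Nat.sub_0_r in Hlast. unfold knot in *.
    pose proof (lknots_sorted 0 i Hi) as Hs. change (lknots K0 0 i) with (K0 i) in *.
    apply Forall_forall. intros y Hy. destruct (In_nth _ y 0 Hy) as [n [Hn <-]].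
    pose proof (sorted_nth_le _ 0 n Hs ltac:(lia) Hn).
    pose proof (sorted_nth_le _ n (length (K0 i) - 1) Hs ltac:(lia) ltac:(lia)).
    lra.
  - rewrite lknots_S. apply Forall_refine; [intros; lra|exact IH].
Qed.

Lemma knot_in_unit (l i n : nat) : (i < d)%nat -> (n < length (lknots K0 l i))%nat ->
  0 <= knot (lknots K0 l i) n <= 1.
Proof.
  intros Hi Hn. pose proof (lknots_in_unit l i Hi) as Hunit.
  rewrite Forall_forall in Hunit. apply Hunit, nth_In, Hn.
Qed.

Lemma lknots_interior_count (l i : nat) (x : R) : (i < d)%nat -> 0 < x < 1 ->
  (count_occ Req_dec_T (lknots K0 l i) x <= p i)%nat.
Proof.
  intros Hi Hx. induction l as [|l IH].
  - destruct (K0_open i Hi) as (_ & _ & _ & _ & _ & _ & Hcount). apply Hcount, Hx.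
  - rewrite lknots_S.
    pose proof (count_occ_refine _ x (lknots_sorted l i Hi)). pose proof (p_pos i Hi). lia.
Qed.

Definition span_covers (l i n : nat) (al be : R) : Prop :=
  (n + p i + 1 < length (lknots K0 l i))%nat /\
  knot (lknots K0 l i) n <= al /\ be <= knot (lknots K0 l i) (n + p i + 1).

Definition bspline_over_box (l : nat) (j : nat -> nat) (a b : nat -> R) : Prop :=
  forall i, (i < d)%nat -> span_covers l i (j i) (a i) (b i).

Lemma bspline_over_box_is_bspline (l : nat) (j : nat -> nat) (a b : nat -> R) :
  bspline_over_box l j a b -> is_bspline d p K0 l j.
Proof. intros Hj i Hi. apply Hj, Hi. Qed.

Lemma box_sub_bsupp (l : nat) (j : nat -> nat) (a b : nat -> R) :
  bspline_over_box l j a b -> subset (box d a b) (bsupp d p K0 l j).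
Proof.
  intros Hj y Hy i Hi. destruct (Hj i Hi) as (_ & Hlo & Hhi).
  destruct (Hy i Hi). split; lra.
Qed.

Lemma bsupp_in_unit (l : nat) (j : nat -> nat) (y : point) :
  is_bspline d p K0 l j -> bsupp d p K0 l j y -> forall i, (i < d)%nat -> 0 <= y i <= 1.
Proof.
  intros Hj Hy i Hi. destruct (Hy i Hi).
  pose proof (knot_in_unit l i (j i) Hi ltac:(specialize (Hj i Hi); lia)).
  pose proof (knot_in_unit l i (j i + p i + 1) Hi (Hj i Hi)). lra.
Qed.

Section BoxCovering.

Variable Omega : nat -> rset.
Hypothesis Omega_0 : forall x, Omega 0%nat x <-> forall i, (i < d)%nat -> 0 <= x i <= 1.
Variables (a b : nat -> R) (m : nat).
Hypothesis box_in_unit : forall i, (i < d)%nat -> 0 <= a i /\ b i <= 1.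
Hypothesis box_one_knot : forall l i, (l <= m)%nat -> (i < d)%nat ->
  at_most_one_knot_in (lknots K0 l i) (a i) (b i).

Lemma box_interior_count (l i : nat) (x : R) : (i < d)%nat -> a i < x < b i ->
  (count_occ Req_dec_T (lknots K0 l i) x <= p i)%nat.
Proof.
  intros Hi Hx. apply lknots_interior_count; [exact Hi|].
  pose proof (box_in_unit i Hi). lra.
Qed.

Lemma bspline_over_box_0 : exists j, bspline_over_box 0 j a b.
Proof.
  apply (bounded_choice d (fun i n => span_covers 0 i n (a i) (b i))). intros i Hi.
  destruct (K0_open i Hi) as (Hlen & _ & Hfirst & Hlast & _).
  specialize (Hfirst 0%nat (Nat.le_0_l _)). specialize (Hlast 0%nat (Nat.le_0_l _)).
  rewrite Nat.sub_0_r in Hlast. pose proof (box_in_unit i Hi).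
  destruct (knot_window (lknots K0 0 i) (p i) (a i) (b i)
    (lknots_sorted 0 i Hi) (box_one_knot 0 i (Nat.le_0_l m) Hi)
    (fun x => box_interior_count 0 i x Hi) 0 (length (K0 i) - 1))
    as (j & _ & Hj & Hlo & Hhi); change (lknots K0 0 i) with (K0 i) in *;
    unfold knot in *; try lia; try lra.
  exists j. unfold span_covers, knot. change (lknots K0 0 i) with (K0 i).
  repeat split; [lia|assumption|assumption].
Qed.

(* Refinement keeps the old knots, so a window found between the images of
   the old endpoints gives a support nested in the old one. *)
Lemma bspline_over_box_S (l : nat) (j : nat -> nat) :
  (S l <= m)%nat -> bspline_over_box l j a b ->
  exists j', bspline_over_box (S l) j' a b /\
    subset (bsupp d p K0 (S l) j') (bsupp d p K0 l j).
Proof.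
  intros Hl Hj.
  destruct (bounded_choice d (fun i n =>
    span_covers (S l) i n (a i) (b i) /\
    knot (lknots K0 l i) (j i) <= knot (lknots K0 (S l) i) n /\
    knot (lknots K0 (S l) i) (n + p i + 1) <= knot (lknots K0 l i) (j i + p i + 1)))
    as [j' Hj'].
  { intros i Hi. destruct (Hj i Hi) as (Hlen & Hlo & Hhi).
    destruct (refine_embedding (lknots K0 l i)) as (f & Hf & Hfnth).
    destruct (Hfnth (j i) ltac:(lia)) as [_ Hfj].
    destruct (Hfnth (j i + p i + 1)%nat Hlen) as [Hflen Hfjp].
    pose proof (strictly_increasing_shift f Hf (j i) (p i + 1)) as Hgap.
    rewrite !Nat.add_assoc in Hgap.
    pose proof (lknots_sorted (S l) i Hi) as Hs. rewrite lknots_S in *. unfold knot in *.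
    destruct (knot_window _ (p i) (a i) (b i) Hs (box_one_knot (S l) i Hl Hi)
      (fun x => box_interior_count (S l) i x Hi) (f (j i)) (f (j i + p i + 1)%nat))
      as (n & Hn1 & Hn2 & Hn3 & Hn4); try lia; try (rewrite Hfj; exact Hlo);
      try (rewrite Hfjp; exact Hhi).
    exists n. rewrite <- Hfj, <- Hfjp. split; [|split].
    - unfold span_covers, knot. rewrite lknots_S. split; [lia|split; assumption].
    - apply sorted_nth_le; [exact Hs|lia|lia].
    - apply sorted_nth_le; [exact Hs|lia|lia]. }
  exists j'. split; [intros i Hi; apply Hj', Hi|].
  intros y Hy i Hi. destruct (Hy i Hi). destruct (Hj' i Hi) as (_ & Hlo & Hhi).
  split; lra.
Qed.

Lemma hbasis_or_nested_bspline (l : nat) : (l <= m)%nat ->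
  (exists kb jb, in_hbasis d p K0 Omega kb jb /\ bspline_over_box kb jb a b) \/
  (exists j, bspline_over_box l j a b /\ subset (bsupp d p K0 l j) (Omega l)).
Proof.
  induction l as [|l IH]; intros Hl.
  - right. destruct bspline_over_box_0 as [j Hj]. exists j. split; [exact Hj|].
    intros y Hy. apply Omega_0.
    exact (bsupp_in_unit 0 j y (bspline_over_box_is_bspline 0 j a b Hj) Hy).
  - destruct (IH ltac:(lia)) as [Hbasis|(j & Hj & Hsupp)]; [left; exact Hbasis|].
    destruct (classic (subset (bsupp d p K0 l j) (Omega (S l)))) as [Hsub|Hnsub].
    + right. destruct (bspline_over_box_S l j Hl Hj) as (j' & Hj' & Hnest).
      exists j'. split; [exact Hj'|]. intros y Hy. apply Hsub, Hnest, Hy.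
    + left. exists l, j. split; [|exact Hj].
      split; [exact (bspline_over_box_is_bspline l j a b Hj)|]. split; assumption.
Qed.

Theorem hbasis_over_box : ~ subset (box d a b) (Omega (S m)) ->
  exists kb jb, in_hbasis d p K0 Omega kb jb /\ subset (box d a b) (bsupp d p K0 kb jb).
Proof.
  intros Hbox.
  destruct (hbasis_or_nested_bspline m (le_n m)) as [(kb & jb & Hb & Hj)|(j & Hj & Hsupp)].
  - exists kb, jb. split; [exact Hb|]. exact (box_sub_bsupp kb jb a b Hj).
  - exists m, j. split; [|exact (box_sub_bsupp m j a b Hj)].
    split; [exact (bspline_over_box_is_bspline m j a b Hj)|]. split; [exact Hsupp|].
    intros Hsub. apply Hbox. intros y Hy. apply Hsub, (box_sub_bsupp m j a b Hj), Hy.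
Qed.

End BoxCovering.

Definition hull_lo (k : nat) (c : nat -> nat) (k' : nat) (c' : nat -> nat) (i : nat) : R :=
  Rmin (knot (lknots K0 k i) (c i)) (knot (lknots K0 k' i) (c' i)).

Definition hull_hi (k : nat) (c : nat -> nat) (k' : nat) (c' : nat -> nat) (i : nat) : R :=
  Rmax (knot (lknots K0 k i) (c i + 1)) (knot (lknots K0 k' i) (c' i + 1)).

Lemma cell_sub_hull_l (k : nat) (c : nat -> nat) (k' : nat) (c' : nat -> nat) :
  subset (cell d K0 k c) (box d (hull_lo k c k' c') (hull_hi k c k' c')).
Proof.
  intros y Hy i Hi. destruct (Hy i Hi). unfold hull_lo, hull_hi.
  pose proof (Rmin_l (knot (lknots K0 k i) (c i)) (knot (lknots K0 k' i) (c' i))).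
  pose proof (Rmax_l (knot (lknots K0 k i) (c i + 1)) (knot (lknots K0 k' i) (c' i + 1))).
  lra.
Qed.

Lemma cell_sub_hull_r (k : nat) (c : nat -> nat) (k' : nat) (c' : nat -> nat) :
  subset (cell d K0 k' c') (box d (hull_lo k c k' c') (hull_hi k c k' c')).
Proof.
  intros y Hy i Hi. destruct (Hy i Hi). unfold hull_lo, hull_hi.
  pose proof (Rmin_r (knot (lknots K0 k i) (c i)) (knot (lknots K0 k' i) (c' i))).
  pose proof (Rmax_r (knot (lknots K0 k i) (c i + 1)) (knot (lknots K0 k' i) (c' i + 1))).
  lra.
Qed.

Lemma hull_in_unit (k : nat) (c : nat -> nat) (k' : nat) (c' : nat -> nat) (i : nat) :
  is_cell d K0 k c -> is_cell d K0 k' c' -> (i < d)%nat ->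
  0 <= hull_lo k c k' c' i /\ hull_hi k c k' c' i <= 1.
Proof.
  intros Hc Hc' Hi. destruct (Hc i Hi) as [Hlen _]. destruct (Hc' i Hi) as [Hlen' _].
  pose proof (knot_in_unit k i (c i) Hi ltac:(lia)).
  pose proof (knot_in_unit k' i (c' i) Hi ltac:(lia)).
  pose proof (knot_in_unit k i (c i + 1) Hi Hlen).
  pose proof (knot_in_unit k' i (c' i + 1) Hi Hlen').
  split; [apply Rmin_glb|apply Rmax_lub]; lra.
Qed.

(* A knot of level l <= k, k' cannot cut the interior of either cell, so
   inside the hull it can only sit where the two spans meet. *)
Lemma hull_one_knot (k : nat) (c : nat -> nat) (k' : nat) (c' : nat -> nat)
  (x : point) (l i : nat) :
  is_cell d K0 k c -> is_cell d K0 k' c' -> cell d K0 k c x -> cell d K0 k' c' x ->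
  (l <= k)%nat -> (l <= k')%nat -> (i < d)%nat ->
  at_most_one_knot_in (lknots K0 l i) (hull_lo k c k' c' i) (hull_hi k c k' c' i).
Proof.
  intros Hc Hc' Hx Hx' Hl Hl' Hi.
  assert (Hjunction : forall y, In y (lknots K0 l i) ->
    hull_lo k c k' c' i < y < hull_hi k c k' c' i ->
    y = Rmax (knot (lknots K0 k i) (c i)) (knot (lknots K0 k' i) (c' i))).
  { intros y Hy Hyin.
    apply (touching_spans_knot (knot (lknots K0 k i) (c i)) (knot (lknots K0 k i) (c i + 1))
      (knot (lknots K0 k' i) (c' i)) (knot (lknots K0 k' i) (c' i + 1)) (x i)).
    - apply Hx, Hi.
    - apply Hx', Hi.
    - apply sorted_no_knot_inside_span; [apply lknots_sorted, Hi| |apply Hc, Hi].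
      apply (lknots_incl K0 l k i Hl), Hy.
    - apply sorted_no_knot_inside_span; [apply lknots_sorted, Hi| |apply Hc', Hi].
      apply (lknots_incl K0 l k' i Hl'), Hy.
    - exact Hyin. }
  intros y y' Hy Hy' Hyin Hy'in. rewrite (Hjunction y Hy Hyin), (Hjunction y' Hy' Hy'in).
  reflexivity.
Qed.

End HierarchicalSplines.


Theorem lemma5p3 (d : nat) (p : nat -> nat) (K0 : nat -> list R)
  (Omega : nat -> rset) :
  (2 <= d)%nat ->
  (forall i, (i < d)%nat -> (1 <= p i)%nat) ->
  (forall i, (i < d)%nat -> p_open (p i) (K0 i)) ->
  hier_domains d K0 Omega ->
  forall k c, in_mesh d K0 Omega k c ->
  forall k' c', in_patch d K0 Omega k c k' c' ->
  neighbor d p K0 Omega k c k' c'.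
Proof.
  intros _ Hp Hopen [HO0 _] k c [Hc [_ HT]] k' c' [Hm' [x [Hx' Hx]]].
  pose proof Hm' as [Hc' [_ HT']].
  destruct (hbasis_over_box d p K0 Hp Hopen Omega HO0
    (hull_lo K0 k c k' c') (hull_hi K0 k c k' c') (Nat.min k k'))
    as (kb & jb & Hb & Hsupp).
  - intros i Hi. exact (hull_in_unit d p K0 Hopen k c k' c' i Hc Hc' Hi).
  - intros l i Hl Hi.
    apply (hull_one_knot d p K0 Hopen k c k' c' x); auto; lia.
  - intros Hsub. destruct (Nat.le_ge_cases k k') as [Hkk|Hkk].
    + rewrite Nat.min_l in Hsub by exact Hkk.
      apply HT. intros y Hy. apply Hsub, cell_sub_hull_l, Hy.
    + rewrite Nat.min_r in Hsub by exact Hkk.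
      apply HT'. intros y Hy. apply Hsub, cell_sub_hull_r, Hy.
  - split; [exact Hm'|]. exists kb, jb. split; [exact Hb|].
    split; intros y Hy; apply Hsupp; [apply cell_sub_hull_l|apply cell_sub_hull_r]; exact Hy.
Qed.
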